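(* Let $v\in C^1(\mathbb{R}^2)$ be a classical solution of the stationary Euler equations on $\mathbb{R}^2$. Suppose there is a bounded region $\Omega\subset\mathbb{R}^2$ with $C^1$ boundary, whose boundary consists of $J\ge1$ connected components, such that $v=\nabla^\perp\bar\psi$ in $\Omega$ and $v=0$ in $\mathbb{R}^2\setminus\Omega$, where $\bar\psi\in C^2(\overline\Omega)$ solves $\Delta\bar\psi+f(\bar\psi)=0$ in $\Omega$ for some $f\in C(\mathbb{R})$. Then $v=\nabla^\perp\psi$ for some $\psi\in C^2(\mathbb{R}^2)$ which satisfies $\Delta\psi+f(\psi)=0$ in all of $\mathbb{R}^2$.
   Context: The stationary Euler equations on $\mathbb{R}^2$: $v\cdot\nabla v+\nabla p=0$ and $\operatorname{div}v=0$ for some pressure $p$. $\nabla^\perp\psi:=(\partial_{x_2}\psi,-\partial_{x_1}\psi)$. *)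

From Stdlib Require Import Reals.
From Coquelicot Require Import Coquelicot.
Open Scope R_scope.

Definition set2 := R -> R -> Prop.

Definition ball2 (a b r : R) : set2 :=
  fun x y => (x - a) ^ 2 + (y - b) ^ 2 < r ^ 2.

Definition open2 (U : set2) : Prop :=
  forall a b, U a b -> exists r, 0 < r /\ forall x y, ball2 a b r x y -> U x y.

Definition bounded2 (U : set2) : Prop :=
  exists M, forall x y, U x y -> Rabs x <= M /\ Rabs y <= M.

Definition closure2 (U : set2) : set2 :=
  fun a b => forall r, 0 < r -> exists x y, U x y /\ ball2 a b r x y.

Definition bdry2 (U : set2) : set2 := fun a b => closure2 U a b /\ ~ U a b.

Definition connected2 (S : set2) : Prop :=
  forall U V, open2 U -> open2 V ->
    (forall x y, S x y -> U x y \/ V x y) ->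
    (forall x y, S x y -> U x y -> V x y -> False) ->
    (forall x y, S x y -> ~ U x y) \/ (forall x y, S x y -> ~ V x y).

Definition closed2 (S : set2) : Prop := forall a b, closure2 S a b -> S a b.

Definition pd1 (f : R -> R -> R) : R -> R -> R := fun x y => Derive (fun t => f t y) x.
Definition pd2 (f : R -> R -> R) : R -> R -> R := fun x y => Derive (fun t => f x t) y.

Definition cont2 (g : R -> R -> R) (x y : R) : Prop :=
  continuous (fun p : R * R => g (fst p) (snd p)) (x, y).

Definition C1_on (U : set2) (f : R -> R -> R) : Prop :=
  forall x y, U x y ->
    ex_derive (fun t => f t y) x /\ ex_derive (fun t => f x t) y /\
    cont2 f x y /\ cont2 (pd1 f) x y /\ cont2 (pd2 f) x y.

Definition C2_on (U : set2) (f : R -> R -> R) : Prop :=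
  C1_on U f /\ C1_on U (pd1 f) /\ C1_on U (pd2 f).

Definition whole : set2 := fun _ _ => True.

Definition ext_cont_closure (U : set2) (h : R -> R -> R) : Prop :=
  forall a b, closure2 U a b -> exists l, forall eps, 0 < eps ->
    exists delta, 0 < delta /\
      forall x y, U x y -> ball2 a b delta x y -> Rabs (h x y - l) < eps.

Definition C2_closure (U : set2) (f : R -> R -> R) : Prop :=
  C2_on U f /\
  ext_cont_closure U f /\
  ext_cont_closure U (pd1 f) /\ ext_cont_closure U (pd2 f) /\
  ext_cont_closure U (pd1 (pd1 f)) /\ ext_cont_closure U (pd2 (pd1 f)) /\
  ext_cont_closure U (pd1 (pd2 f)) /\ ext_cont_closure U (pd2 (pd2 f)).

Definition C1_boundary (U : set2) : Prop :=
  forall a b, bdry2 U a b -> exists r phi, 0 < r /\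
    C1_on (ball2 a b r) phi /\
    (forall x y, ball2 a b r x y -> pd1 phi x y <> 0 \/ pd2 phi x y <> 0) /\
    (forall x y, ball2 a b r x y -> (U x y <-> phi x y < 0)).

(* The set S is the disjoint union of exactly J nonempty closed connected
   sets C 0, ..., C (J-1); equivalently S has exactly J connected components. *)
Definition has_J_components (S : set2) (J : nat) : Prop :=
  exists C : nat -> set2,
    (forall i, (i < J)%nat -> (exists x y, C i x y) /\ connected2 (C i) /\ closed2 (C i)) /\
    (forall i j x y, (i < J)%nat -> (j < J)%nat -> i <> j -> C i x y -> C j x y -> False) /\
    (forall x y, S x y <-> exists i, (i < J)%nat /\ C i x y).

Definition laplacian2 (f : R -> R -> R) : R -> R -> R :=
  fun x y => pd1 (pd1 f) x y + pd2 (pd2 f) x y.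

Definition stationary_euler (v1 v2 : R -> R -> R) : Prop :=
  C1_on whole v1 /\ C1_on whole v2 /\
  exists p : R -> R -> R, C1_on whole p /\
    forall x y,
      v1 x y * pd1 v1 x y + v2 x y * pd2 v1 x y + pd1 p x y = 0 /\
      v1 x y * pd1 v2 x y + v2 x y * pd2 v2 x y + pd2 p x y = 0 /\
      pd1 v1 x y + pd2 v2 x y = 0.

Definition contR1 (f : R -> R) (x : R) : Prop := continuous f x.

From Stdlib Require Import Reals Lra Psatz FunctionalExtensionality Classical.
From Coquelicot Require Import Coquelicot.
Open Scope R_scope.

(** Since div v = 0 on all of R^2, v = ∇^⊥ψ for the global stream function
    ψ(x,y) = ∫_0^y v1(0,s) ds - ∫_0^x v2(t,y) dt, which is C^2 because v is C^1.
    On the connected set Ω, ∇(ψ - ψ̄) = 0, so after subtracting a constant ψ = ψ̄ there;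
    hence Δψ + f(ψ) = 0 on Ω and, by continuity, on its closure. Off the closure v
    vanishes on a neighbourhood, so Δψ = 0 there and ψ is constant along a segment
    running to Ω until the segment first meets the closure; at that point Δψ = 0 as a
    limit of exterior values, so f(ψ) = 0 there, hence at the starting point too. *)

Lemma between_Rabs a b c : Rmin a b <= c <= Rmax a b -> Rabs (c - a) <= Rabs (b - a).
Proof. unfold Rmin, Rmax; destruct Rle_dec; intros; split_Rabs; lra. Qed.

Lemma between_sqr a b c : Rmin a b <= c <= Rmax a b -> (c - a) ^ 2 <= (b - a) ^ 2.
Proof. unfold Rmin, Rmax; destruct Rle_dec; intros; nra. Qed.

Lemma is_derive_continuity_pt (h : R -> R) x l : is_derive h x l -> continuity_pt h x.
Proof. intros H. apply derivable_continuous_pt. exists l. now apply is_derive_Reals. Qed.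

Lemma is_derive_minus_const (h : R -> R) c x l : is_derive h x l -> is_derive (fun t => h t - c) x l.
Proof.
  intros H. replace l with (minus l zero) by (unfold minus, plus, opp, zero; simpl; ring).
  exact (is_derive_minus _ _ x _ _ H (is_derive_const c x)).
Qed.

Lemma is_derive_minus_zero (g h : R -> R) x l :
  is_derive g x l -> is_derive h x l -> is_derive (fun t => g t - h t) x 0.
Proof.
  intros Hg Hh. replace 0 with (minus l l) by (unfold minus, plus, opp; simpl; ring).
  exact (is_derive_minus _ _ x _ _ Hg Hh).
Qed.

Lemma eq_of_is_derive_zero (h : R -> R) a b :
  (forall t, Rmin a b < t < Rmax a b -> is_derive h t 0) ->
  (forall t, Rmin a b <= t <= Rmax a b -> continuity_pt h t) -> h b = h a.
Proof. intros Hd Hc. destruct (MVT_gen h a b (fun _ => 0) Hd Hc) as [c [_ Hc']]. lra. Qed.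

Lemma is_derive_RInt_0 (h : R -> R) x :
  (forall t, continuous h t) -> is_derive (fun t => RInt h 0 t) x (h x).
Proof.
  intros Hh. apply is_derive_RInt with (a := 0); [|apply Hh].
  apply filter_forall. intros t. apply RInt_correct, (ex_RInt_continuous (V := R_CompleteNormedModule)).
  intros; apply Hh.
Qed.

Lemma first_hit (P : R -> Prop) :
  ~ P 0 -> P 1 ->
  (forall t, ~ P t -> exists d, 0 < d /\ forall s, Rabs (s - t) < d -> ~ P s) ->
  exists ts, 0 < ts <= 1 /\ P ts /\ forall s, 0 <= s < ts -> ~ P s.
Proof.
  intros H0 H1 Hopen.
  set (T := fun t => 0 <= t <= 1 /\ forall s, 0 <= s <= t -> ~ P s).
  assert (HT0 : T 0) by (split; [lra | intros s Hs; replace s with 0 by lra; exact H0]).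
  destruct (completeness T) as [m [Hub Hlub]].
  { exists 1. intros t [Ht _]. lra. }
  { now exists 0. }
  assert (Hm : 0 <= m <= 1) by (split; [apply Hub, HT0 | apply Hlub; intros t [Ht _]; lra]).
  assert (Hbefore : forall s, 0 <= s < m -> ~ P s).
  { intros s Hs Ps. enough (m <= s) by lra.
    apply Hlub. intros t [Ht Hts]. destruct (Rle_lt_dec t s); [lra|].
    exfalso. apply (Hts s); [lra | exact Ps]. }
  assert (Hhit : P m).
  { apply NNPP. intros Hn. destruct (Hopen m Hn) as [d [Hd Hnear]].
    assert (Hm1 : m < 1) by (destruct (Req_dec m 1) as [->|]; [contradiction | lra]).
    set (t := Rmin (m + d / 2) 1).
    assert (Ht : m < t <= Rmin (m + d / 2) 1) by (unfold t, Rmin; destruct Rle_dec; lra).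
    assert (Hmt : T t).
    { split; [unfold Rmin in Ht; destruct Rle_dec; lra|].
      intros s Hs. destruct (Rlt_le_dec s m); [apply Hbefore; lra|].
      apply Hnear. unfold Rmin in Ht; destruct Rle_dec; split_Rabs; lra. }
    specialize (Hub t Hmt). lra. }
  exists m. repeat split; try lra; auto.
  destruct (Req_dec m 0) as [->|]; [contradiction | lra].
Qed.

Lemma ball2_box a b r x y : 0 < r -> ball2 a b r x y -> Rabs (x - a) < r /\ Rabs (y - b) < r.
Proof.
  unfold ball2. intros Hr H.
  assert (0 <= (x - a) ^ 2) by apply pow2_ge_0. assert (0 <= (y - b) ^ 2) by apply pow2_ge_0.
  split; apply Rabs_def1; nra.
Qed.

Lemma ball2_triangle a b x y u w r s : 0 < r -> 0 < s ->
  ball2 a b r x y -> ball2 x y s u w -> ball2 a b (r + s) u w.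
Proof.
  unfold ball2. intros Hr Hs H1 H2.
  set (p := x - a) in *. set (q := y - b) in *. set (m := u - x) in *. set (n := w - y) in *.
  replace (u - a) with (p + m) by (unfold p, m; ring).
  replace (w - b) with (q + n) by (unfold q, n; ring).
  assert (CS : (p * m + q * n) ^ 2 <= (p ^ 2 + q ^ 2) * (m ^ 2 + n ^ 2)).
  { pose proof (pow2_ge_0 (p * n - q * m)). nra. }
  assert (Hprod : (p ^ 2 + q ^ 2) * (m ^ 2 + n ^ 2) < r ^ 2 * s ^ 2).
  { assert (0 <= p ^ 2 + q ^ 2) by nra.
    apply (Rle_lt_trans _ ((p ^ 2 + q ^ 2) * s ^ 2)).
    - apply Rmult_le_compat_l; lra.
    - apply Rmult_lt_compat_r; [apply pow_lt|]; lra. }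
  assert (p * m + q * n < r * s).
  { destruct (Rlt_le_dec (p * m + q * n) (r * s)) as [|Hge]; [assumption|].
    assert (Hrs : 0 < r * s) by nra.
    pose proof (Rmult_le_compat _ _ _ _ (Rlt_le _ _ Hrs) (Rlt_le _ _ Hrs) Hge Hge). nra. }
  nra.
Qed.

Lemma ball2_segment x y dx dy t r : 0 < r ->
  exists d, 0 < d /\ forall s, Rabs (s - t) < d ->
    ball2 (x + t * dx) (y + t * dy) r (x + s * dx) (y + s * dy).
Proof.
  intros Hr. set (k := 1 + Rabs dx + Rabs dy).
  assert (Hk : 1 <= k) by (unfold k; pose proof (Rabs_pos dx); pose proof (Rabs_pos dy); lra).
  exists (r / k). split; [apply Rdiv_lt_0_compat; lra|]. intros s Hs.
  unfold ball2.
  replace (x + s * dx - (x + t * dx)) with ((s - t) * dx) by ring.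
  replace (y + s * dy - (y + t * dy)) with ((s - t) * dy) by ring.
  assert (Hsk : Rabs (s - t) * k < r).
  { apply (Rmult_lt_compat_r k) in Hs; [|lra]. unfold Rdiv in Hs. rewrite Rmult_assoc, Rinv_l, Rmult_1_r in Hs; lra. }
  rewrite <- (pow2_abs ((s - t) * dx)), <- (pow2_abs ((s - t) * dy)), !Rabs_mult.
  pose proof (Rabs_pos (s - t)). pose proof (Rabs_pos dx). pose proof (Rabs_pos dy).
  assert (Hsum : Rabs (s - t) * Rabs dx + Rabs (s - t) * Rabs dy < r) by (unfold k in Hsk; nra).
  assert (0 <= Rabs (s - t) * Rabs dx) by nra. assert (0 <= Rabs (s - t) * Rabs dy) by nra.
  nra.
Qed.

Lemma closure2_incl (U : set2) x y : U x y -> closure2 U x y.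
Proof. intros H r Hr. exists x, y. split; [exact H|]. unfold ball2. nra. Qed.

Lemma closure2_inhabited (U : set2) a b : closure2 U a b -> exists x y, U x y.
Proof. intros H. destruct (H 1 Rlt_0_1) as [x [y [Hxy _]]]. now exists x, y. Qed.

Lemma not_closure2_ball (U : set2) a b :
  ~ closure2 U a b -> exists r, 0 < r /\ forall x y, ball2 a b r x y -> ~ U x y.
Proof.
  intros H. apply not_all_ex_not in H as [r H]. apply imply_to_and in H as [Hr H].
  exists r. split; [exact Hr|]. intros x y Hb Hu. apply H. now exists x, y.
Qed.

Lemma open2_exterior (U : set2) : open2 (fun x y => ~ closure2 U x y).
Proof.
  intros a b Hab. destruct (not_closure2_ball U a b Hab) as [r [Hr Hball]].
  exists (r / 2). split; [lra|]. intros x y Hxy Hcl.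
  destruct (Hcl (r / 2) ltac:(lra)) as [u [w [Huw Hb]]].
  apply (Hball u w); [|exact Huw].
  replace r with (r / 2 + r / 2) by field. apply (ball2_triangle a b x y); lra || assumption.
Qed.

Lemma closure2_zero (U : set2) (G : R -> R -> R) a b :
  (forall x y, U x y -> G x y = 0) -> continuity_2d_pt G a b -> closure2 U a b -> G a b = 0.
Proof.
  intros HU HG Hcl. apply NNPP. intros Hne.
  destruct (HG (mkposreal _ (Rabs_pos_lt _ Hne))) as [d Hd].
  destruct (Hcl d (cond_pos d)) as [x [y [Hxy Hb]]].
  destruct (ball2_box a b d x y (cond_pos d) Hb) as [Hx Hy].
  specialize (Hd x y Hx Hy). simpl in Hd.
  rewrite (HU x y Hxy), Rminus_0_l, Rabs_Ropp in Hd. lra.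
Qed.

Lemma closure2_segment_end (E : set2) x y dx dy ts : 0 < ts ->
  (forall s, 0 <= s < ts -> E (x + s * dx) (y + s * dy)) ->
  closure2 E (x + ts * dx) (y + ts * dy).
Proof.
  intros Hts HE r Hr. destruct (ball2_segment x y dx dy ts r Hr) as [d [Hd Hball]].
  set (s := Rmax 0 (ts - d / 2)).
  exists (x + s * dx), (y + s * dy). split.
  - apply HE. unfold s, Rmax. destruct Rle_dec; lra.
  - apply Hball. unfold s, Rmax. destruct Rle_dec; split_Rabs; lra.
Qed.

Lemma cont2_continuity_2d_pt g x y : cont2 g x y <-> continuity_2d_pt g x y.
Proof. now rewrite continuity_2d_pt_filterlim. Qed.

Lemma cont2_line1 g x y : cont2 g x y -> continuous (fun t => g t y) x.
Proof.
  intros H. apply (continuous_comp_2 (fun t => t) (fun _ => y) g x);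
    [apply continuous_id | apply continuous_const | exact H].
Qed.

Lemma cont2_line2 g x y : cont2 g x y -> continuous (fun t => g x t) y.
Proof.
  intros H. apply (continuous_comp_2 (fun _ => x) (fun t => t) g y);
    [apply continuous_const | apply continuous_id | exact H].
Qed.

Lemma C1_on_is_derive1 (U : set2) g x y : C1_on U g -> U x y ->
  is_derive (fun t => g t y) x (pd1 g x y).
Proof. intros H Hxy. apply Derive_correct, (H x y Hxy). Qed.

Lemma C1_on_is_derive2 (U : set2) g x y : C1_on U g -> U x y ->
  is_derive (fun t => g x t) y (pd2 g x y).
Proof. intros H Hxy. apply Derive_correct, (H x y Hxy). Qed.

Lemma pd1_of_is_derive (g d : R -> R -> R) :
  (forall x y, is_derive (fun t => g t y) x (d x y)) -> pd1 g = d.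
Proof.
  intros H. apply functional_extensionality; intros x; apply functional_extensionality; intros y.
  apply is_derive_unique, H.
Qed.

Lemma pd2_of_is_derive (g d : R -> R -> R) :
  (forall x y, is_derive (fun t => g x t) y (d x y)) -> pd2 g = d.
Proof.
  intros H. apply functional_extensionality; intros x; apply functional_extensionality; intros y.
  apply is_derive_unique, H.
Qed.

Lemma open2_locally1 (U : set2) a b : open2 U -> U a b -> locally a (fun t => U t b).
Proof.
  intros HU Hab. destruct (HU a b Hab) as [r [Hr Hball]].
  exists (mkposreal r Hr). intros t Ht. apply Hball. change (Rabs (t - a) < r) in Ht.
  unfold ball2. rewrite Rminus_diag. rewrite <- (pow2_abs (t - a)). pose proof (Rabs_pos (t - a)). nra.
Qed.

Lemma open2_locally2 (U : set2) a b : open2 U -> U a b -> locally b (fun t => U a t).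
Proof.
  intros HU Hab. destruct (HU a b Hab) as [r [Hr Hball]].
  exists (mkposreal r Hr). intros t Ht. apply Hball. change (Rabs (t - b) < r) in Ht.
  unfold ball2. rewrite Rminus_diag. rewrite <- (pow2_abs (t - b)). pose proof (Rabs_pos (t - b)). nra.
Qed.

Lemma pd1_ext_open (U : set2) (g h : R -> R -> R) x y : open2 U ->
  (forall x y, U x y -> g x y = h x y) -> U x y -> pd1 g x y = pd1 h x y.
Proof.
  intros HU Hgh Hxy. apply Derive_ext_loc.
  apply (filter_imp (fun t => U t y)); [intros t; apply Hgh | now apply open2_locally1].
Qed.

Lemma pd2_ext_open (U : set2) (g h : R -> R -> R) x y : open2 U ->
  (forall x y, U x y -> g x y = h x y) -> U x y -> pd2 g x y = pd2 h x y.
Proof.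
  intros HU Hgh Hxy. apply Derive_ext_loc.
  apply (filter_imp (fun t => U x t)); [intros t; apply Hgh | now apply open2_locally2].
Qed.

Lemma laplacian2_ext_open (U : set2) (g h : R -> R -> R) x y : open2 U ->
  (forall x y, U x y -> g x y = h x y) -> U x y -> laplacian2 g x y = laplacian2 h x y.
Proof.
  intros HU Hgh Hxy. unfold laplacian2.
  rewrite (pd1_ext_open U (pd1 g) (pd1 h)), (pd2_ext_open U (pd2 g) (pd2 h)); auto;
    intros u w Huw; [apply (pd2_ext_open U) | apply (pd1_ext_open U)]; auto.
Qed.

Lemma laplacian2_zero_open (U : set2) g x y : open2 U ->
  (forall x y, U x y -> pd1 g x y = 0 /\ pd2 g x y = 0) -> U x y -> laplacian2 g x y = 0.
Proof.
  intros HU Hg Hxy. unfold laplacian2.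
  rewrite (pd1_ext_open U (pd1 g) (fun _ _ => 0)), (pd2_ext_open U (pd2 g) (fun _ _ => 0));
    try (intros u w Huw; apply Hg, Huw); auto.
  unfold pd1, pd2. rewrite !Derive_const. ring.
Qed.

Lemma C1_on_opp (U : set2) g : C1_on U g -> C1_on U (fun x y => - g x y).
Proof.
  intros H x y Hxy. destruct (H x y Hxy) as (D1 & D2 & C & C1 & C2).
  assert (E1 : pd1 (fun x y => - g x y) = fun x y => - pd1 g x y).
  { apply functional_extensionality; intros u; apply functional_extensionality; intros w.
    apply (Derive_opp (fun t => g t w)). }
  assert (E2 : pd2 (fun x y => - g x y) = fun x y => - pd2 g x y).
  { apply functional_extensionality; intros u; apply functional_extensionality; intros w.
    apply (Derive_opp (fun t => g u t)). }
  rewrite E1, E2. repeat split.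
  - exact (ex_derive_opp (K := R_AbsRing) (V := R_NormedModule) _ x D1).
  - exact (ex_derive_opp (K := R_AbsRing) (V := R_NormedModule) _ y D2).
  all: apply cont2_continuity_2d_pt, continuity_2d_pt_opp, cont2_continuity_2d_pt; assumption.
Qed.

Lemma differentiable_pt_lim_of_continuous_partials (g d1 d2 : R -> R -> R) x y :
  (forall u w, is_derive (fun t => g t w) u (d1 u w)) ->
  (forall u w, is_derive (fun t => g u t) w (d2 u w)) ->
  continuity_2d_pt d1 x y -> continuity_2d_pt d2 x y ->
  differentiable_pt_lim g x y (d1 x y) (d2 x y).
Proof.
  intros D1 D2 C1 C2 eps.
  assert (He2 : 0 < eps / 2) by (destruct eps; simpl; lra).
  destruct (C1 (mkposreal _ He2)) as [e1 He1]. destruct (C2 (mkposreal _ He2)) as [e2 He2'].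
  exists (mkposreal _ (Rmin_pos _ _ (cond_pos e1) (cond_pos e2))). simpl. intros u w Hu Hw.
  pose proof (Rmin_l e1 e2). pose proof (Rmin_r e1 e2).
  destruct (MVT_gen (fun t => g t w) x u (fun t => d1 t w)) as [c [Hc Ec]];
    [intros; apply D1 | intros; eapply is_derive_continuity_pt, D1 |].
  destruct (MVT_gen (fun t => g x t) y w (fun t => d2 x t)) as [c' [Hc' Ec']];
    [intros; apply D2 | intros; eapply is_derive_continuity_pt, D2 |].
  apply between_Rabs in Hc. apply between_Rabs in Hc'.
  assert (B1 : Rabs (d1 c w - d1 x y) < eps / 2) by (apply He1; lra).
  assert (B2 : Rabs (d2 x c' - d2 x y) < eps / 2).
  { apply He2'; [rewrite Rminus_diag, Rabs_R0; apply cond_pos | lra]. }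
  replace (g u w - g x y - (d1 x y * (u - x) + d2 x y * (w - y))) with
    ((d1 c w - d1 x y) * (u - x) + (d2 x c' - d2 x y) * (w - y)) by lra.
  eapply Rle_trans; [apply Rabs_triang|]. rewrite !Rabs_mult.
  pose proof (Rmax_l (Rabs (u - x)) (Rabs (w - y))). pose proof (Rmax_r (Rabs (u - x)) (Rabs (w - y))).
  pose proof (Rabs_pos (u - x)). pose proof (Rabs_pos (w - y)).
  pose proof (Rabs_pos (d1 c w - d1 x y)). pose proof (Rabs_pos (d2 x c' - d2 x y)).
  nra.
Qed.

Lemma C2_on_whole_of_gradient (g d1 d2 : R -> R -> R) :
  (forall x y, is_derive (fun t => g t y) x (d1 x y)) ->
  (forall x y, is_derive (fun t => g x t) y (d2 x y)) ->
  C1_on whole d1 -> C1_on whole d2 -> C2_on whole g.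
Proof.
  intros D1 D2 Hd1 Hd2. unfold C2_on.
  rewrite (pd1_of_is_derive g d1 D1), (pd2_of_is_derive g d2 D2).
  split; [|split; assumption]. intros x y _.
  rewrite (pd1_of_is_derive g d1 D1), (pd2_of_is_derive g d2 D2).
  destruct (Hd1 x y I) as (_ & _ & C1 & _). destruct (Hd2 x y I) as (_ & _ & C2 & _).
  split; [eexists; apply D1|]. split; [eexists; apply D2|]. split; [|split; assumption].
  apply cont2_continuity_2d_pt, differentiable_continuity_pt. exists (d1 x y), (d2 x y).
  apply differentiable_pt_lim_of_continuous_partials; try assumption;
    apply cont2_continuity_2d_pt; assumption.
Qed.

Lemma differentiable_pt_lim_of_C1 g x y : C1_on whole g ->
  differentiable_pt_lim g x y (pd1 g x y) (pd2 g x y).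
Proof.
  intros Hg. destruct (Hg x y I) as (_ & _ & _ & C1 & C2).
  apply differentiable_pt_lim_of_continuous_partials;
    try (intros; apply (C1_on_is_derive1 whole) || apply (C1_on_is_derive2 whole); easy);
    apply cont2_continuity_2d_pt; assumption.
Qed.

Lemma continuity_2d_pt_laplacian2 g x y : C2_on whole g -> continuity_2d_pt (laplacian2 g) x y.
Proof.
  intros (_ & H1 & H2). destruct (H1 x y I) as (_ & _ & _ & C1 & _).
  destruct (H2 x y I) as (_ & _ & _ & _ & C2).
  apply continuity_2d_pt_plus; apply cont2_continuity_2d_pt; assumption.
Qed.

Lemma ball2_const (g : R -> R -> R) a b r :
  (forall x y, ball2 a b r x y -> is_derive (fun t => g t y) x 0) ->
  (forall x y, ball2 a b r x y -> is_derive (fun t => g x t) y 0) ->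
  forall x y, ball2 a b r x y -> g x y = g a b.
Proof.
  intros D1 D2 x y Hxy.
  assert (Hhor : forall t, Rmin a x <= t <= Rmax a x -> ball2 a b r t b).
  { intros t Ht. apply between_sqr in Ht. unfold ball2 in *.
    pose proof (pow2_ge_0 (y - b)). rewrite Rminus_diag. lra. }
  assert (Hver : forall t, Rmin b y <= t <= Rmax b y -> ball2 a b r x t).
  { intros t Ht. apply between_sqr in Ht. unfold ball2 in *. lra. }
  transitivity (g x b).
  - apply (eq_of_is_derive_zero (fun t => g x t)); intros t Ht.
    + apply D2, Hver. lra.
    + apply (is_derive_continuity_pt _ _ 0), D2, Hver, Ht.
  - apply (eq_of_is_derive_zero (fun t => g t b)); intros t Ht.
    + apply D1, Hhor. lra.
    + apply (is_derive_continuity_pt _ _ 0), D1, Hhor, Ht.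
Qed.

Lemma connected2_const (U : set2) (g : R -> R -> R) x0 y0 :
  open2 U -> connected2 U -> U x0 y0 ->
  (forall x y, U x y -> is_derive (fun t => g t y) x 0) ->
  (forall x y, U x y -> is_derive (fun t => g x t) y 0) ->
  forall x y, U x y -> g x y = g x0 y0.
Proof.
  intros HU Hconn H0 D1 D2.
  assert (Hloc : forall a b, U a b -> exists r, 0 < r /\
            forall x y, ball2 a b r x y -> U x y /\ g x y = g a b).
  { intros a b Hab. destruct (HU a b Hab) as [r [Hr Hball]]. exists r. split; [exact Hr|].
    intros x y Hxy. split; [now apply Hball|].
    apply (ball2_const g a b r); auto. }
  destruct (Hconn (fun x y => U x y /\ g x y = g x0 y0) (fun x y => U x y /\ g x y <> g x0 y0))
    as [Hnone | Hnone].
  - intros a b [Hab E]. destruct (Hloc a b Hab) as [r [Hr Hball]]. exists r. split; [exact Hr|].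
    intros x y Hxy. destruct (Hball x y Hxy) as [Hu ->]. auto.
  - intros a b [Hab E]. destruct (Hloc a b Hab) as [r [Hr Hball]]. exists r. split; [exact Hr|].
    intros x y Hxy. destruct (Hball x y Hxy) as [Hu ->]. auto.
  - intros x y Hxy. destruct (Req_dec (g x y) (g x0 y0)); auto.
  - intros x y _ [_ E] [_ NE]. contradiction.
  - exfalso. now apply (Hnone x0 y0 H0).
  - intros x y Hxy. apply NNPP. intros NE. now apply (Hnone x y Hxy).
Qed.

Lemma segment_const (g d1 d2 : R -> R -> R) x y dx dy ts :
  (forall u w, differentiable_pt_lim g u w (d1 u w) (d2 u w)) -> 0 <= ts ->
  (forall s, 0 < s < ts -> d1 (x + s * dx) (y + s * dy) = 0 /\ d2 (x + s * dx) (y + s * dy) = 0) ->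
  g (x + ts * dx) (y + ts * dy) = g x y.
Proof.
  intros Hg Hts H0.
  set (h := fun s => g (x + s * dx) (y + s * dy)).
  assert (Dh : forall s, is_derive h s (d1 (x + s * dx) (y + s * dy) * dx + d2 (x + s * dx) (y + s * dy) * dy)).
  { intros s. apply is_derive_Reals.
    apply (derivable_pt_lim_comp_2d g (fun s => x + s * dx) (fun s => y + s * dy)); [apply Hg|..];
      apply is_derive_Reals; auto_derive; auto; ring. }
  change (h ts = g x y). replace (g x y) with (h 0) by (unfold h; f_equal; ring).
  apply eq_of_is_derive_zero; rewrite Rmin_left, Rmax_right by lra; intros s Hs.
  - destruct (H0 s Hs) as [E1 E2]. specialize (Dh s). rewrite E1, E2 in Dh.
    replace 0 with (0 * dx + 0 * dy) by ring. exact Dh.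
  - exact (is_derive_continuity_pt _ _ _ (Dh s)).
Qed.

Lemma exterior_first_hit (U : set2) x y x0 y0 :
  ~ closure2 U x y -> U x0 y0 ->
  exists ts, 0 < ts /\ closure2 U (x + ts * (x0 - x)) (y + ts * (y0 - y)) /\
    forall s, 0 <= s < ts -> ~ closure2 U (x + s * (x0 - x)) (y + s * (y0 - y)).
Proof.
  intros Hxy H0.
  destruct (first_hit (fun t => closure2 U (x + t * (x0 - x)) (y + t * (y0 - y))))
    as [ts [Hts [Hhit Hbefore]]].
  - now rewrite !Rmult_0_l, !Rplus_0_r.
  - replace (x + 1 * (x0 - x)) with x0 by ring. replace (y + 1 * (y0 - y)) with y0 by ring.
    now apply closure2_incl.
  - intros t Ht. destruct (open2_exterior U _ _ Ht) as [r [Hr Hball]].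
    destruct (ball2_segment x y (x0 - x) (y0 - y) t r Hr) as [d [Hd Hnear]].
    exists d. split; [exact Hd|]. intros s Hs. apply Hball, Hnear, Hs.
  - exists ts. repeat split; auto. lra.
Qed.

Lemma has_J_components_inhabited (S : set2) J :
  (1 <= J)%nat -> has_J_components S J -> exists x y, S x y.
Proof.
  intros HJ [C [HC [_ HS]]]. destruct (HC 0%nat HJ) as [[x [y Hxy]] _].
  exists x, y. apply HS. now exists 0%nat.
Qed.

Section StreamFunction.

Variables v1 v2 : R -> R -> R.
Hypothesis Hv1 : C1_on whole v1.
Hypothesis Hv2 : C1_on whole v2.
Hypothesis Hdiv : forall x y, pd1 v1 x y + pd2 v2 x y = 0.

Definition stream (x y : R) : R := RInt (fun s => v1 0 s) 0 y - RInt (fun t => v2 t y) 0 x.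

Lemma is_derive_stream1 x y : is_derive (fun t => stream t y) x (- v2 x y).
Proof.
  replace (- v2 x y) with (minus zero (v2 x y)) by (unfold minus, plus, opp, zero; simpl; ring).
  apply (is_derive_minus (fun _ => RInt (fun s => v1 0 s) 0 y) (fun t => RInt (fun t => v2 t y) 0 t)).
  - apply (is_derive_const (K := R_AbsRing) (V := R_NormedModule)).
  - apply (is_derive_RInt_0 (fun t => v2 t y)). intros t. apply cont2_line1, (Hv2 t y I).
Qed.

(* Differentiation under the integral sign, then div v = 0 turns the integrand into -d1 v1. *)
Lemma is_derive_stream2 x y : is_derive (fun t => stream x t) y (v1 x y).
Proof.
  assert (Hint : RInt (fun t => Derive (fun u => v2 t u) y) 0 x = v1 0 y - v1 x y).
  { rewrite (RInt_ext _ (fun t => opp (Derive (fun z => v1 z y) t))).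
    - rewrite (RInt_opp (V := R_CompleteNormedModule)), RInt_Derive.
      + unfold opp; simpl. ring.
      + intros t _. apply (Hv1 t y I).
      + intros t _. apply (cont2_line1 (pd1 v1)), (Hv1 t y I).
      + apply (ex_RInt_continuous (V := R_CompleteNormedModule)). intros t _.
        apply (cont2_line1 (pd1 v1)), (Hv1 t y I).
    - intros t _. pose proof (Hdiv t y) as Hd. unfold pd1, pd2 in Hd. unfold opp; simpl. lra. }
  replace (v1 x y) with (minus (v1 0 y) (v1 0 y - v1 x y)) by (unfold minus, plus, opp; simpl; ring).
  apply (is_derive_minus (fun t => RInt (fun s => v1 0 s) 0 t) (fun u => RInt (fun t => v2 t u) 0 x)).
  - apply (is_derive_RInt_0 (fun s => v1 0 s)). intros t. apply cont2_line2, (Hv1 0 t I).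
  - rewrite <- Hint. apply (is_derive_RInt_param (fun u t => v2 t u)).
    + apply filter_forall. intros u t _. apply (Hv2 t u I).
    + intros t _. destruct (Hv2 t y I) as (_ & _ & _ & _ & C).
      apply cont2_continuity_2d_pt in C. intros eps. destruct (C eps) as [d Hd].
      exists d. intros u w Hu Hw. now apply Hd.
    + apply filter_forall. intros u. apply (ex_RInt_continuous (V := R_CompleteNormedModule)).
      intros t _. apply cont2_line1, (Hv2 t u I).
Qed.

Lemma stream_sub_const (U : set2) (psibar : R -> R -> R) x0 y0 :
  open2 U -> connected2 U -> U x0 y0 -> C1_on U psibar ->
  (forall x y, U x y -> v1 x y = pd2 psibar x y /\ v2 x y = - pd1 psibar x y) ->
  forall x y, U x y -> stream x y - psibar x y = stream x0 y0 - psibar x0 y0.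
Proof.
  intros HU Hconn H0 Hpsibar Hgrad.
  apply (connected2_const U (fun x y => stream x y - psibar x y)); auto;
    intros x y Hxy; eapply is_derive_minus_zero; destruct (Hgrad x y Hxy) as [E2 E1].
  - apply is_derive_stream1.
  - rewrite E1, Ropp_involutive. now apply (C1_on_is_derive1 U).
  - apply is_derive_stream2.
  - rewrite E2. now apply (C1_on_is_derive2 U).
Qed.

End StreamFunction.

Lemma semilinear_eq_extends (U : set2) (psi : R -> R -> R) (f : R -> R) :
  (exists x0 y0, U x0 y0) -> C2_on whole psi -> (forall x, contR1 f x) ->
  (forall x y, ~ U x y -> pd1 psi x y = 0 /\ pd2 psi x y = 0) ->
  (forall x y, U x y -> laplacian2 psi x y + f (psi x y) = 0) ->
  forall x y, laplacian2 psi x y + f (psi x y) = 0.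
Proof.
  intros [x0 [y0 H0]] Hpsi Hf Hgrad HU.
  assert (Hclosure : forall x y, closure2 U x y -> laplacian2 psi x y + f (psi x y) = 0).
  { intros x y. apply (closure2_zero U (fun x y => laplacian2 psi x y + f (psi x y))); [exact HU|].
    apply continuity_2d_pt_plus; [now apply continuity_2d_pt_laplacian2|].
    apply continuity_1d_2d_pt_comp; [apply continuity_pt_filterlim, Hf|].
    destruct Hpsi as [Hpsi _]. apply cont2_continuity_2d_pt, (Hpsi x y I). }
  assert (Hext : forall x y, ~ closure2 U x y -> laplacian2 psi x y = 0).
  { intros x y Hxy. apply (laplacian2_zero_open (fun u w => ~ closure2 U u w));
      [apply open2_exterior | | exact Hxy].
    intros u w Huw. apply Hgrad. intros Hu. now apply Huw, closure2_incl. }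
  intros x y. destruct (classic (closure2 U x y)) as [Hxy | Hxy]; [now apply Hclosure|].
  destruct (exterior_first_hit U x y x0 y0 Hxy H0) as [ts [Hts [Hhit Hbefore]]].
  assert (Hpsi_ts : psi (x + ts * (x0 - x)) (y + ts * (y0 - y)) = psi x y).
  { apply (segment_const psi (pd1 psi) (pd2 psi)); [|lra|].
    - intros u w. apply differentiable_pt_lim_of_C1, Hpsi.
    - intros s Hs. apply Hgrad. intros Hu. apply (Hbefore s); [lra | now apply closure2_incl]. }
  assert (Hlap_ts : laplacian2 psi (x + ts * (x0 - x)) (y + ts * (y0 - y)) = 0).
  { apply (closure2_zero (fun u w => ~ closure2 U u w)); [exact Hext| |].
    - now apply continuity_2d_pt_laplacian2.
    - now apply closure2_segment_end. }
  pose proof (Hclosure _ _ Hhit) as Heq. rewrite Hlap_ts, Hpsi_ts in Heq.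
  rewrite Hext by exact Hxy. lra.
Qed.

Theorem propositionA1
  (v1 v2 : R -> R -> R) (Omega : R -> R -> Prop) (J : nat)
  (psibar : R -> R -> R) (f : R -> R) :
  stationary_euler v1 v2 ->
  open2 Omega -> connected2 Omega -> bounded2 Omega ->
  C1_boundary Omega ->
  (1 <= J)%nat -> has_J_components (bdry2 Omega) J ->
  C2_closure Omega psibar ->
  (forall x, contR1 f x) ->
  (forall x y, Omega x y -> laplacian2 psibar x y + f (psibar x y) = 0) ->
  (forall x y, Omega x y -> v1 x y = pd2 psibar x y /\ v2 x y = - pd1 psibar x y) ->
  (forall x y, ~ Omega x y -> v1 x y = 0 /\ v2 x y = 0) ->
  exists psi : R -> R -> R,
    C2_on whole psi /\
    (forall x y, v1 x y = pd2 psi x y /\ v2 x y = - pd1 psi x y) /\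
    (forall x y, laplacian2 psi x y + f (psi x y) = 0).
Proof.
  intros (Hv1 & Hv2 & p & _ & Heuler) Hopen Hconn _ _ HJ Hcomp [[Hpsibar _] _] Hf Hpde Hin Hout.
  assert (Hdiv : forall x y, pd1 v1 x y + pd2 v2 x y = 0) by apply Heuler.
  destruct (has_J_components_inhabited _ _ HJ Hcomp) as (a & b & Hab & _).
  destruct (closure2_inhabited _ _ _ Hab) as (x0 & y0 & H0).
  set (c := stream v1 v2 x0 y0 - psibar x0 y0).
  set (psi := fun x y => stream v1 v2 x y - c).
  assert (D1 : forall x y, is_derive (fun t => psi t y) x (- v2 x y))
    by (intros; apply is_derive_minus_const, is_derive_stream1, Hv2).
  assert (D2 : forall x y, is_derive (fun t => psi x t) y (v1 x y))
    by (intros; apply is_derive_minus_const, is_derive_stream2; assumption).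
  assert (Hpsi_psibar : forall x y, Omega x y -> psi x y = psibar x y).
  { intros x y Hxy. enough (stream v1 v2 x y - psibar x y = c) by (unfold psi; lra).
    now apply (stream_sub_const v1 v2 Hv1 Hv2 Hdiv Omega). }
  assert (Hgrad1 : pd1 psi = fun x y => - v2 x y) by now apply pd1_of_is_derive.
  assert (Hgrad2 : pd2 psi = v1) by now apply pd2_of_is_derive.
  assert (Hpsi : C2_on whole psi)
    by (apply (C2_on_whole_of_gradient psi (fun x y => - v2 x y) v1); auto using C1_on_opp).
  exists psi. split; [exact Hpsi | split].
  - intros x y. rewrite Hgrad1, Hgrad2. split; [reflexivity | ring].
  - apply (semilinear_eq_extends Omega); [now exists x0, y0 | exact Hpsi | exact Hf | |].
    + intros x y Hxy. rewrite Hgrad1, Hgrad2. destruct (Hout x y Hxy) as [-> ->]. split; ring.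
    + intros x y Hxy. rewrite (laplacian2_ext_open Omega psi psibar), Hpsi_psibar; auto.
Qed.
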